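(* Let $d\ge2$, $0\le r\le d-1$ and $M\ge1$ be integers. Let $N_{r,d}(M)$ be the number of distinct orbits $o(\mathbf{x})$ with $\mathbf{x}\in[0,M]^2\cap\mathbb{Z}^2$ and $\operatorname{length}(o(\mathbf{x}))\equiv r\pmod d$. Then $$N_{r,d}(M)=\begin{cases}0,& \text{if } 2\,\|\, d \text{ and } 2\nmid r,\ \text{or } 4\mid d\text{ and } 4\nmid r;\\ \frac1d M^2+O(M),&\text{if } 2\,\|\, d\text{ and } 2\mid r;\\ \frac2dM^2+O(M),&\text{if } 4\mid d\text{ and }4\mid r;\\ \frac1{2d}M^2+O(M),&\text{if }2\nmid d.\end{cases}$$ Here $2\,\|\,d$ means $2\mid d$ and $4\nmid d$.
   Context: Define $\mathcal K_1,\mathcal K_2:\mathbb{Z}^2\to\mathbb{Z}^2$ by $\mathcal K_1(x_1,x_2)=(-x_1+x_2,x_2)$ and $\mathcal K_2(x_1,x_2)=(x_1,x_1-x_2)$. The orbit $o(\mathbf{x})$ of $\mathbf{x}=(x_1,x_2)$ is the set of points obtained from $\mathbf{x}$ by repeatedly applying $\mathcal K_1$ and $\mathcal K_2$. It consists of $(x_1,x_2)$, $(-x_1+x_2,x_2)$, $(-x_1+x_2,-x_1)$, $(-x_2,-x_1)$, $(-x_2,x_1-x_2)$, $(x_1,x_1-x_2)$. Orbits partition $\mathbb{Z}^2$. The length (perimeter) of the orbit is the Euclidean length of the closed path through these six points in the listed order: $$\operatorname{length}(o(\mathbf{x}))=2\big(|2x_1-x_2|+|x_1+x_2|+|2x_2-x_1|\big).$$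 *)

From HB Require Import structures.
From mathcomp Require Import all_boot all_order all_algebra.
From mathcomp Require Import finmap.
Set Implicit Arguments. Unset Strict Implicit. Unset Printing Implicit Defensive.
Import Order.TTheory GRing.Theory Num.Theory.
Local Open Scope ring_scope.

Definition pt := (int * int)%type.

Definition K1 (x : pt) : pt := (- x.1 + x.2, x.2).
Definition K2 (x : pt) : pt := (x.1, x.1 - x.2).

Definition orbit (x : pt) : {fset pt} :=
  [fset x; K1 x; K2 (K1 x); K1 (K2 (K1 x)); K2 (K1 (K2 (K1 x)));
        K1 (K2 (K1 (K2 (K1 x))))]%fset.

(* Perimeter of the orbit. *)
Definition orbit_length (x : pt) : int :=
  2 * (`|2 * x.1 - x.2| + `|x.1 + x.2| + `|2 * x.2 - x.1|).

Definition grid (M : nat) : seq pt :=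
  [seq ((i%:Z), (j%:Z)) | i <- iota 0 M.+1, j <- iota 0 M.+1].

Definition N_count (r d M : nat) : nat :=
  size (undup [seq orbit x | x <- grid M &
                 (orbit_length x == r%:Z %[mod d%:Z])%Z]).

From Pilot Require Import Defs.
From HB Require Import structures.
From mathcomp Require Import all_boot all_order all_algebra.
From mathcomp Require Import finmap zify ring lra.
Set Implicit Arguments. Unset Strict Implicit. Unset Printing Implicit Defensive.
Import Order.TTheory GRing.Theory Num.Theory.

(* Every orbit meeting the quadrant has exactly one point (s, b) or (b, s)
   with 0 <= 2 s <= b (and s > 0 in the second case), where its length is
   8 b - 4 s.  Since 4 divides every length, no orbit has length r mod d unless
   g = gcd(4, d) divides r; if it does, 8 b - 4 s = r (mod d) cuts out a single
   residue class of s modulo m = d / g.  Row b of either family therefore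
   contributes (b / 2) / m + O(1) orbits, and summing over b <= M gives
   N = 2 (M^2 / 4) / m + O(M) = M^2 / (2 m) + O(M). *)

Lemma count_mod_iota m k lo : 0 < m ->
  count (fun s => s %% m == k %% m) (iota lo m) = 1.
Proof.
move=> m_gt0; elim: lo => [|lo IHlo].
  rewrite (@eq_in_count _ _ (pred1 (k %% m))); last first.
    by move=> s; rewrite mem_iota add0n => /andP[_ ltsm]; rewrite /= modn_small.
  by rewrite count_uniq_mem ?iota_uniq // mem_iota add0n ltn_pmod.
case: m m_gt0 IHlo => // m _.
have iotaSr : iota lo.+1 m.+1 = iota lo.+1 m ++ [:: lo + m.+1].
  by rewrite -{1}[m.+1]addn1 iotaD addSnnS.
rewrite iotaSr count_cat /= => <-.
by rewrite modnDr addnC addn0.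
Qed.

Lemma count_mod_iota_bounds m k lo n : 0 < m ->
  let c := count (fun s => s %% m == k %% m) (iota lo n) in
  c * m <= n + m /\ n <= c * m + m.
Proof.
move=> m_gt0 /=; elim/ltn_ind: n lo => n IHn lo.
have [ltnm|lemn] := ltnP n m.
  have : count (fun s => s %% m == k %% m) (iota lo n) <= 1.
    by rewrite -(@count_mod_iota m k lo m_gt0) -(subnKC (ltnW ltnm)) iotaD count_cat leq_addr.
  by case: (count _ _) => [|[|]] //=; lia.
rewrite -(subnKC lemn) iotaD count_cat count_mod_iota //.
have := IHn (n - m) ltac:(lia) (lo + m); lia.
Qed.

Lemma count_sumn (T : Type) (a : pred T) s : count a s = \sum_(x <- s) a x.
Proof. by elim: s => [|x s IHs]; rewrite ?big_nil // big_cons /= IHs. Qed.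

Lemma count_window (p : pred nat) N lo hi : lo <= hi <= N ->
  \sum_(i <- iota 0 N) ((lo <= i < hi) && p i) = count p (iota lo (hi - lo)).
Proof.
move=> /andP[le_lo_hi le_hi_N].
have iotaE : iota 0 N = iota 0 lo ++ iota lo (hi - lo) ++ iota hi (N - hi).
  rewrite {1}(_ : N = lo + ((hi - lo) + (N - hi))); last by lia.
  by rewrite !iotaD add0n subnKC.
rewrite -(count_sumn (fun i => (lo <= i < hi) && p i)) iotaE !count_cat.
have outside lo' n : (lo' + n <= lo) || (hi <= lo') ->
    count (fun i => (lo <= i < hi) && p i) (iota lo' n) = 0.
  move=> disjoint; rewrite (@eq_in_count _ _ pred0) ?count_pred0 // => i.
  by rewrite mem_iota => ?; apply/negbTE; lia.
rewrite (outside 0) ?(outside hi) ?leqnn ?orbT // add0n addn0.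
by apply: eq_in_count => i; rewrite mem_iota => ?; rewrite (_ : lo <= i < hi); lia.
Qed.

Lemma leq_sum_seq_add (s : seq nat) (f g : nat -> nat) e :
  (forall j, j \in s -> f j <= g j + e) ->
  \sum_(j <- s) f j <= \sum_(j <- s) g j + size s * e.
Proof.
move=> le_fg; rewrite -sum1_size big_distrl -big_split /=.
rewrite big_seq_cond [X in _ <= X]big_seq_cond.
by apply: leq_sum => j /andP[js _]; rewrite mul1n le_fg.
Qed.

Lemma sum_rows_bounds (c n : nat -> nat) m e M :
  (forall b, c b * m <= n b + e /\ n b <= c b * m + e) ->
  let sc := \sum_(b <- iota 0 M.+1) c b in let sn := \sum_(b <- iota 0 M.+1) n b in
  sc * m <= sn + M.+1 * e /\ sn <= sc * m + M.+1 * e.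
Proof.
move=> bounds /=; rewrite big_distrl /= -[in M.+1](size_iota 0 M.+1).
by split; apply: leq_sum_seq_add => b _; case: (bounds b).
Qed.

Lemma sum_half_iota M : 4 * (\sum_(j <- iota 0 M.+1) j./2) + odd M = M * M.
Proof.
elim: M => [|M IHM]; first by rewrite big_cons big_nil.
rewrite -[M.+2]addn1 iotaD big_cat big_seq1 add0n.
move: IHM; rewrite mulnDr; move: (\sum_(j <- iota 0 M.+1) j./2) => S.
rewrite mulSn mulnS; lia.
Qed.

Lemma dvdn_mul_gcd a d n : 0 < a -> (d %| a * n) = (d %/ gcdn a d %| n).
Proof.
move=> a_gt0; set g := gcdn a d; have g_gt0 : 0 < g by rewrite gcdn_gt0 a_gt0.
have Ed : d = d %/ g * g by rewrite divnK ?dvdn_gcdr.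
have Ea : a = a %/ g * g by rewrite divnK ?dvdn_gcdl.
have coprime_quot : coprime (d %/ g) (a %/ g).
  by rewrite /coprime -(eqn_pmul2r g_gt0) mul1n muln_gcdl -Ed -Ea gcdnC.
by rewrite {1}Ed {1}Ea mulnAC dvdn_pmul2r // Gauss_dvdr.
Qed.

Lemma divn_gcdr_gt0 a d : 0 < d -> 0 < d %/ gcdn a d.
Proof. by move=> d_gt0; rewrite divn_gt0 ?gcdn_gt0 ?d_gt0 ?orbT // dvdn_leq // dvdn_gcdr. Qed.

Local Open Scope ring_scope.

Lemma dvdz_mul_gcd (a d : nat) (z : int) : (0 < a)%N ->
  (d%:Z %| a%:Z * z)%Z = ((d %/ gcdn a d)%N%:Z %| z)%Z.
Proof. by move=> a_gt0; rewrite !dvdzE abszM /= dvdn_mul_gcd. Qed.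

Lemma linear_congr_class (a d : nat) (c : int) : (0 < a)%N -> (0 < d)%N ->
  ((gcdn a d)%:Z %| c)%Z ->
  exists s0 : nat, forall s : nat,
    (a%:Z * s%:Z == c %[mod d%:Z])%Z = (s == s0 %[mod d %/ gcdn a d])%N.
Proof.
move=> a_gt0 d_gt0 /dvdzP[k ->].
have [u [v Bezout]] := Bezoutz a%:Z d%:Z.
(* With c = k g and u a + v d = g, the solution is s0 = u k mod d. *)
set s0 := `|(u * k %% d%:Z)%Z|%N.
have s0E : s0%:Z = (u * k %% d%:Z)%Z by rewrite gez0_abs // modz_ge0 // eqz_nat -lt0n.
exists s0 => s.
pose t := (- k * v - a%:Z * (u * k %/ d%:Z)%Z) * d%:Z.
have -> : k * gcdz a d = a%:Z * s0%:Z - t.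
  move: (divz_eq (u * k) d%:Z); rewrite /t s0E -Bezout.
  move: (u * k %/ d%:Z)%Z (u * k %% d%:Z)%Z => q rem ukE.
  have -> : rem = u * k - q * d%:Z by rewrite ukE; ring.
  ring.
rewrite eqz_mod_dvd (_ : _ - _ = a%:Z * (s%:Z - s0%:Z) + t); last by ring.
rewrite rpredDr; last exact: dvdz_mull (dvdzz _).
rewrite dvdz_mul_gcd // -eqz_mod_dvd.
by rewrite !modz_nat eqz_nat.
Qed.

(* [Defs.orbit] is qualified throughout: plain [orbit] is fingraph's. *)
Lemma mem_orbit (x z : pt) : (z \in Defs.orbit x) =
     (z.1 == x.1) && (z.2 == x.2) || (z.1 == x.2 - x.1) && (z.2 == x.2)
  || (z.1 == x.2 - x.1) && (z.2 == - x.1) || (z.1 == - x.2) && (z.2 == - x.1)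
  || (z.1 == - x.2) && (z.2 == x.1 - x.2) || (z.1 == x.1) && (z.2 == x.1 - x.2).
Proof.
case: x z => a b [p q]; rewrite /Defs.orbit !inE /K1 /K2 /= !xpair_eqE.
apply/idP/idP; lia.
Qed.

Lemma orbitK1 x : Defs.orbit (K1 x) = Defs.orbit x.
Proof. by apply/fsetP => z; rewrite !mem_orbit /K1 /=; apply/idP/idP; lia. Qed.

Lemma orbitK2 x : Defs.orbit (K2 x) = Defs.orbit x.
Proof. by apply/fsetP => z; rewrite !mem_orbit /K2 /=; apply/idP/idP; lia. Qed.

Lemma orbit_lengthK1 x : orbit_length (K1 x) = orbit_length x.
Proof. rewrite /orbit_length /K1 /=; lia. Qed.

Lemma orbit_lengthK2 x : orbit_length (K2 x) = orbit_length x.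
Proof. rewrite /orbit_length /K2 /=; lia. Qed.

Lemma dvdz4_orbit_length x : (4 %| orbit_length x)%Z.
Proof. by rewrite /orbit_length; lia. Qed.

Lemma mem_grid M x :
  (x \in grid M) = [&& 0 <= x.1, x.1 <= M%:Z, 0 <= x.2 & x.2 <= M%:Z].
Proof.
case: x => a b /=; apply/allpairsP/idP => [[[i j]] [+ + [-> ->]]|bounds].
  by rewrite !mem_iota /=; lia.
exists (`|a|%N, `|b|%N); rewrite !mem_iota; split=> /=; try lia.
congr (_, _); lia.
Qed.

Lemma grid_uniq M : uniq (grid M).
Proof.
by apply: allpairs_uniq; rewrite ?iota_uniq // => [[i j] [i' j']] _ _ /= [-> ->].
Qed.

Definition fundamental (x : pt) : bool :=
  (0 <= x.1) && (2 * x.1 <= x.2) || (0 < x.2) && (2 * x.2 <= x.1).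

Definition fundamental_rep (x : pt) : pt :=
  if fundamental x then x
  else if x.2 <= 0 then K1 (K2 x)
  else if x.1 <= x.2 then K1 x else K2 x.

Lemma fundamental_repK12 (T : Type) (f : pt -> T) :
  (forall x, f (K1 x) = f x) -> (forall x, f (K2 x) = f x) ->
  forall x, f (fundamental_rep x) = f x.
Proof.
move=> fK1 fK2 x; rewrite /fundamental_rep.
by case: ifP => // _; case: ifP => _; rewrite ?fK1 ?fK2 //; case: ifP => _; rewrite ?fK1 ?fK2.
Qed.

Lemma fundamental_rep_grid M x : x \in grid M ->
  (fundamental_rep x \in grid M) && fundamental (fundamental_rep x).
Proof.
rewrite !mem_grid /fundamental_rep /fundamental; case: x => a b /=.
case: ifP => /= F; first lia.
case: ifP => /= L; rewrite /K1 /K2 /=; first lia.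
case: ifP => /= D; lia.
Qed.

Lemma fundamental_orbit_inj M x y : x \in grid M -> y \in grid M ->
  fundamental x -> fundamental y -> Defs.orbit x = Defs.orbit y -> x = y.
Proof.
move=> + + + + oxy; have : y \in Defs.orbit x by rewrite oxy mem_orbit; lia.
rewrite !mem_grid mem_orbit /fundamental; case: x {oxy} => a b; case: y => p q /= *.
congr (_, _); lia.
Qed.

Lemma count_orbits_fundamental M (P : pred pt) :
  (forall x, P (K1 x) = P x) -> (forall x, P (K2 x) = P x) ->
  size (undup [seq Defs.orbit x | x <- grid M & P x]) =
  count (fun x => fundamental x && P x) (grid M).
Proof.
move=> PK1 PK2; have Prep := fundamental_repK12 PK1 PK2.
rewrite -size_filter -(size_map Defs.orbit).
apply: perm_size; apply: uniq_perm; first exact: undup_uniq.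
  rewrite map_inj_in_uniq; first by rewrite filter_uniq // grid_uniq.
  move=> x y; rewrite !mem_filter => /andP[/andP[Fx _] Gx] /andP[/andP[Fy _] Gy].
  exact: fundamental_orbit_inj Gx Gy Fx Fy.
move=> o; rewrite mem_undup; apply/mapP/mapP => -[x]; rewrite mem_filter.
  move=> /andP[Px Gx] ->; exists (fundamental_rep x).
    by rewrite mem_filter Prep Px andbT; case/andP: (fundamental_rep_grid Gx) => -> ->.
  by rewrite (fundamental_repK12 orbitK1 orbitK2).
by move=> /andP[/andP[_ Px] Gx] ->; exists x; rewrite // mem_filter Px.
Qed.

Lemma count_allpairs_nat (f : pred pt) (s t : seq nat) :
  count f [seq (i%:Z, j%:Z) | i <- s, j <- t] =
  (\sum_(i <- s) \sum_(j <- t) f (i%:Z, j%:Z))%N.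
Proof.
elim: s => [|i s IHs]; first by rewrite big_nil.
by rewrite allpairs_cons count_cat IHs big_cons count_map count_sumn.
Qed.

Lemma fundamental_natE (P : pred int) (i j : nat) :
  nat_of_bool (fundamental (i%:Z, j%:Z) && P (orbit_length (i%:Z, j%:Z)))
  = addn (nat_of_bool ((0 <= i < (j./2).+1)%N && P (8 * j%:Z - 4 * i%:Z)))
         (nat_of_bool ((1 <= j < (i./2).+1)%N && P (8 * i%:Z - 4 * j%:Z))).
Proof.
have -> : (0 <= i < (j./2).+1)%N = (2 * i <= j)%N by lia.
have -> : (1 <= j < (i./2).+1)%N = (0 < j)%N && (2 * j <= i)%N by lia.
rewrite /fundamental /orbit_length /=.
have [le2ij|lt_j2i] := leqP (2 * i) j.
  have -> : ((0 < j)%N && (2 * j <= i)%N) = false by lia.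
  rewrite addn0 (_ : _ || _ = true); last by lia.
  congr (P _ : nat); lia.
have [/andP[j_gt0 le2ji]|] := boolP ((0 < j)%N && (2 * j <= i)%N).
  rewrite (_ : _ || _ = true); last by lia.
  congr (P _ : nat); lia.
by move=> not_le; rewrite (_ : _ || _ = false) //; lia.
Qed.

Lemma count_fundamental_rows (P : pred int) M :
  count (fun x => fundamental x && P (orbit_length x)) (grid M) =
  addn (\sum_(b <- iota 0 M.+1)
          count (fun s : nat => P (8 * b%:Z - 4 * s%:Z)%R) (iota 0 (b./2).+1))
       (\sum_(b <- iota 0 M.+1)
          count (fun s : nat => P (8 * b%:Z - 4 * s%:Z)%R) (iota 1 b./2)).
Proof.
rewrite count_allpairs_nat.
under eq_bigr do under eq_bigr do rewrite fundamental_natE.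
under eq_bigr do rewrite big_split.
rewrite big_split exchange_big; congr (_ + _)%N.
  apply: eq_big_seq => b; rewrite mem_iota => ?.
  by rewrite count_window ?subn0 //; lia.
apply: eq_big_seq => b; rewrite mem_iota => ?.
by rewrite count_window ?subn1 //; lia.
Qed.

Lemma row_congr_class r d b : (0 < d)%N -> (gcdn 4 d %| r)%N ->
  exists s0 : nat, forall s : nat,
    (8 * b%:Z - 4 * s%:Z == r%:Z %[mod d%:Z])%Z = (s == s0 %[mod d %/ gcdn 4 d])%N.
Proof.
move=> d_gt0 g_dvd_r.
have g_dvd_c : ((gcdn 4 d)%:Z %| 8 * b%:Z - r%:Z)%Z.
  rewrite rpredB ?dvdz_mulr // dvdzE //=.
  exact: dvdn_trans (dvdn_gcdl 4 d) _.
have [s0 s0P] := linear_congr_class (isT : (0 < 4)%N) d_gt0 g_dvd_c.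
exists s0 => s; rewrite -s0P !eqz_mod_dvd.
by rewrite -rpredN opprB; congr (_ %| _)%Z; ring.
Qed.

Lemma count_row_congr_bounds r d b lo n : (0 < d)%N -> (gcdn 4 d %| r)%N ->
  let m := (d %/ gcdn 4 d)%N in
  let c := count (fun s : nat => (8 * b%:Z - 4 * s%:Z == r%:Z %[mod d%:Z])%Z) (iota lo n) in
  (c * m <= n + m /\ n <= c * m + m)%N.
Proof.
move=> d_gt0 g_dvd_r m /=; have [s0 s0P] := row_congr_class b d_gt0 g_dvd_r.
by rewrite (eq_count s0P); apply/count_mod_iota_bounds/divn_gcdr_gt0.
Qed.

Lemma N_count_bounds r d M : (0 < d)%N -> (gcdn 4 d %| r)%N -> (1 <= M)%N ->
  let m := (d %/ gcdn 4 d)%N in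
  (2 * m * N_count r d M <= M * M + (8 * m + 4) * M)%N /\
  (M * M <= 2 * m * N_count r d M + (8 * m + 4) * M)%N.
Proof.
move=> d_gt0 g_dvd_r M_gt0 m.
pose P x := (x == r%:Z %[mod d%:Z])%Z.
have PK1 x : P (orbit_length (K1 x)) = P (orbit_length x) by rewrite orbit_lengthK1.
have PK2 x : P (orbit_length (K2 x)) = P (orbit_length x) by rewrite orbit_lengthK2.
rewrite /N_count (count_orbits_fundamental _ PK1 PK2) (count_fundamental_rows P).
have bounds := fun b lo n : nat => count_row_congr_bounds b lo n d_gt0 g_dvd_r.
have [up1 lo1] := sum_rows_bounds M (fun b => bounds b 0%N (b./2).+1).
have [up2 lo2] := sum_rows_bounds M (fun b => bounds b 1%N b./2).
have sumS : (\sum_(b <- iota 0 M.+1) (b./2).+1 = \sum_(b <- iota 0 M.+1) b./2 + M.+1)%N.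
  rewrite (eq_bigr (fun b => b./2 + 1)%N) ?big_split ?sum1_size ?size_iota //.
  by move=> b _; rewrite addn1.
rewrite -/m sumS in up1 lo1; rewrite -/m in up2 lo2.
have halves := sum_half_iota M.
have m_le_Mm : (m <= M * m)%N by rewrite leq_pmull.
move: (\sum_(b <- _) count _ (iota 0 _))%N (\sum_(b <- _) count _ (iota 1 _))%N up1 lo1 up2 lo2.
move: (\sum_(b <- _) b./2)%N halves => S halves T1 T2.
have -> : (2 * m * (T1 + T2) = 2 * (T1 * m) + 2 * (T2 * m))%N by ring.
have -> : ((8 * m + 4) * M = 8 * (M * m) + 4 * M)%N by ring.
rewrite mulSn.
move: (T1 * m)%N (T2 * m)%N (M * m)%N (M * M)%N m_le_Mm halves => a b p q; lia.
Qed.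

Lemma dist_sqr_divn_le (R : realFieldType) (N M t K : nat) : (0 < t)%N ->
  (t * N <= M * M + K * M)%N -> (M * M <= t * N + K * M)%N ->
  `|N%:R - t%:R^-1 * M%:R ^+ 2| <= K%:R * M%:R :> R.
Proof.
move=> t_gt0; rewrite -!(ler_nat R) !natrD !natrM -expr2 => up lo.
have t_ge1 : 1 <= t%:R :> R by rewrite ler1n.
have t_pos : 0 < t%:R :> R by rewrite ltr0n.
have KM_ge0 : 0 <= K%:R * M%:R :> R by rewrite mulr_ge0.
have KM_le : K%:R * M%:R <= K%:R * M%:R * t%:R :> R by rewrite ler_peMr.
have -> : N%:R - t%:R^-1 * M%:R ^+ 2 = (t%:R * N%:R - M%:R ^+ 2) / t%:R :> R.
  by rewrite mulrBl mulrAC divff ?mul1r 1?mulrC // gt_eqF.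
rewrite ler_norml ler_pdivrMr // ler_pdivlMr // mulNr.
by apply/andP; split; lra.
Qed.

Lemma N_count_asymptotic r d : (0 < d)%N -> (gcdn 4 d %| r)%N ->
  exists C : rat, forall M : nat, (1 <= M)%N ->
    `|(N_count r d M)%:R - (2 * (d %/ gcdn 4 d))%N%:R^-1 * M%:R ^+ 2| <= C * M%:R.
Proof.
move=> d_gt0 g_dvd_r; exists (8 * (d %/ gcdn 4 d) + 4)%N%:R => M M_gt0.
have [up lo] := N_count_bounds d_gt0 g_dvd_r M_gt0.
by apply: dist_sqr_divn_le; rewrite // muln_gt0 divn_gcdr_gt0.
Qed.

Lemma N_count_eq0 g r d M : (g %| 4)%N -> (g %| d)%N -> ~~ (g %| r)%N ->
  N_count r d M = 0%N.
Proof.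
move=> g_dvd4 g_dvd_d g_ndvd_r; rewrite /N_count (@eq_filter _ _ pred0) ?filter_pred0 //.
move=> x /=; apply/negbTE; rewrite eqz_mod_dvd; apply: contra g_ndvd_r => cong.
have g_dvd_len : (g%:Z %| orbit_length x)%Z.
  by apply: dvdz_trans (dvdz4_orbit_length x); rewrite dvdzE.
have : (g%:Z %| orbit_length x - (orbit_length x - r%:Z))%Z.
  by rewrite rpredB // (dvdz_trans _ cong) // dvdzE.
by rewrite opprB addrC subrK dvdzE.
Qed.

Lemma gcd4n_2mod4 d : (2 %| d)%N -> ~~ (4 %| d)%N -> gcdn 4 d = 2%N.
Proof.
move=> d2 d_n4; have : (2 %| gcdn 4 d)%N by rewrite dvdn_gcd d2.
have : (gcdn 4 d %| 4)%N := dvdn_gcdl 4 d.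
have : gcdn 4 d != 4%N by apply: contraNneq d_n4 => <-; apply: dvdn_gcdr.
by case: (gcdn 4 d) => [|[|[|[|[|]]]]].
Qed.

Lemma gcd4n_odd d : ~~ (2 %| d)%N -> gcdn 4 d = 1%N.
Proof.
move=> d_odd; apply/eqP; change (coprime (2 ^ 2) d).
by rewrite coprime_pexpl // coprime2n; move: d_odd; rewrite dvdn2 negbK.
Qed.

Theorem theorem1p3 (d r : nat) (hd : (2 <= d)%N) (hr : (r <= d - 1)%N) :
  ( ((2 %| d)%N && ~~ (4 %| d)%N && ~~ (2 %| r)%N) || ((4 %| d)%N && ~~ (4 %| r)%N) ->
      forall M : nat, (1 <= M)%N -> N_count r d M = 0%N ) /\
  ( (2 %| d)%N && ~~ (4 %| d)%N && (2 %| r)%N ->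
      exists C : rat, forall M : nat, (1 <= M)%N ->
        `| (N_count r d M)%:R - (1 / d%:R) * (M%:R) ^+ 2 | <= C * M%:R ) /\
  ( (4 %| d)%N && (4 %| r)%N ->
      exists C : rat, forall M : nat, (1 <= M)%N ->
        `| (N_count r d M)%:R - (2 / d%:R) * (M%:R) ^+ 2 | <= C * M%:R ) /\
  ( ~~ (2 %| d)%N ->
      exists C : rat, forall M : nat, (1 <= M)%N ->
        `| (N_count r d M)%:R - (1 / (2 * d%:R)) * (M%:R) ^+ 2 | <= C * M%:R ).
Proof.
have d_gt0 : (0 < d)%N by lia.
have asymp := N_count_asymptotic d_gt0.
split; [|split; [|split]].
- case/orP=> [/andP[/andP[d2 _] r_odd] | /andP[d4 r_n4]] M _.
    exact: (N_count_eq0 _ _ d2 r_odd).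
  exact: (N_count_eq0 _ _ d4 r_n4).
- move=> /andP[/andP[d2 d_n4] r2]; have g2 := gcd4n_2mod4 d2 d_n4.
  rewrite (_ : 1 / d%:R = (2 * (d %/ gcdn 4 d))%N%:R^-1); last by rewrite g2 mulnC divnK ?div1r.
  by apply: asymp; rewrite g2.
- move=> /andP[d4 r4]; have /gcdn_idPl g4 := d4.
  rewrite (_ : 2 / d%:R = (2 * (d %/ gcdn 4 d))%N%:R^-1); last first.
    have k_gt0 : (0 < d %/ 4)%N by rewrite divn_gt0 // dvdn_leq.
    rewrite g4 -{1}(divnK d4) !natrM; field.
    by rewrite pnatr_eq0 -lt0n.
  by apply: asymp; rewrite g4.
- move=> d_odd; have g1 := gcd4n_odd d_odd.
  rewrite (_ : 1 / (2 * d%:R) = (2 * (d %/ gcdn 4 d))%N%:R^-1); last first.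
    by rewrite g1 divn1 natrM div1r.
  by apply: asymp; rewrite g1.
Qed.
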